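(* Every celebrity game $\Gamma=\langle V,(w_u)_{u\in V},\alpha,\beta\rangle$ with $\beta>1$ has a Nash equilibrium. More precisely, with $n=|V|$ and $w_{\max}=\max_{u\in V}w_u$: if $\alpha\ge w_{\max}$ then the edgeless graph $I_n$ on $V$ is a Nash equilibrium graph of $\Gamma$; if $\alpha<w_{\max}$ then a star graph $S_n$ on $V$ (a tree in which one vertex is adjacent to all the others) is a Nash equilibrium graph of $\Gamma$, while $I_n$ is not.
   Context: A celebrity game $\Gamma=\langle V,(w_u)_{u\in V},\alpha,\beta\rangle$ consists of a set of players $V=\{1,\dots,n\}$, celebrity weights $w_u>0$, a link cost $\alpha>0$ and a critical distance $\beta$ with $1\le\beta\le n-1$. A strategy of player $u$ is a set $S_u\subseteq V\setminus\{u\}$; a strategy profile is $S=(S_1,\dots,S_n)$; its outcome graph $G[S]$ is the undirected graph on $V$ with edge set $\{\{u,v\}: u\in S_v\text{ or }v\in S_u\}$. With $d_G$ the graph distance (infinite between different connected components), the cost of player $u$ is $c_u(S)=\alpha|S_u|+\sum_{v:\,d_{G[S]}(u,v)>\beta}w_v$. $S$ is a Nash equilibrium if no player can strictly decrease its cost by changing only its own strategy; a graph $G$ is a Nash equilibrium graph of $\Gamma$ if $G=G[S]$ for some Nash equilibrium $S$. *)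

From mathcomp Require Import all_boot all_order all_algebra.
Set Implicit Arguments. Unset Strict Implicit. Unset Printing Implicit Defensive.
Import Order.TTheory GRing.Theory Num.Theory.
Local Open Scope ring_scope.

(* Players are V = 'I_n.  A graph on V is a symmetric relation (edge set). *)

(* dist_le e k u v  <=>  d_G(u,v) <= k, i.e. there is a walk of length <= k
   from u to v in the graph with adjacency relation e.
   (d(u,v) > k, including d = infinity, is exactly ~~ dist_le e k u v.) *)
Fixpoint dist_le {T : finType} (e : rel T) (k : nat) (u v : T) : bool :=
  match k with
  | 0 => u == v
  | k'.+1 => dist_le e k' u v || [exists x, dist_le e k' u x && e x v]
  end.

(* A strategy profile: S u is the set of players u buys links to. *)
Definition profile (n : nat) := 'I_n -> {set 'I_n}.

Definition valid_profile n (S : profile n) : Prop := forall u, u \notin S u.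

Definition outcome n (S : profile n) : rel 'I_n :=
  fun u v => (u \in S v) || (v \in S u).

Definition cost (R : realFieldType) n (w : 'I_n -> R) (alpha : R) (beta : nat)
    (S : profile n) (u : 'I_n) : R :=
  alpha * (#|S u|)%:R
  + \sum_(v | ~~ dist_le (outcome S) beta u v) w v.

Definition deviate n (S : profile n) (u : 'I_n) (T : {set 'I_n}) : profile n :=
  fun x => if x == u then T else S x.

Definition nash (R : realFieldType) n (w : 'I_n -> R) (alpha : R) (beta : nat)
    (S : profile n) : Prop :=
  valid_profile S /\
  forall u (T : {set 'I_n}), u \notin T ->
    cost w alpha beta S u <= cost w alpha beta (deviate S u T) u.

Definition is_NE_graph (R : realFieldType) n (w : 'I_n -> R) (alpha : R)
    (beta : nat) (G : rel 'I_n) : Prop :=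
  exists S : profile n, nash w alpha beta S /\ forall x y, G x y = outcome S x y.

Definition edgeless n : rel 'I_n := fun _ _ => false.

Definition star n (c : 'I_n) : rel 'I_n :=
  fun x y => (x != y) && ((x == c) || (y == c)).

(* w_max = max_u w_u (weights are positive, so 0 is a neutral start). *)
Definition wmax (R : realFieldType) n (w : 'I_n -> R) : R :=
  \big[Num.max/0]_(u < n) w u.

From mathcomp Require Import all_boot all_order all_algebra.
From mathcomp Require Import zify.
Set Implicit Arguments. Unset Strict Implicit. Unset Printing Implicit Defensive.
Import Order.TTheory GRing.Theory Num.Theory.
Local Open Scope ring_scope.

(* When links cost at least every weight, buying a link to v never costs less
   than the weight of v it saves, so nobody leaves the edgeless profile.  When
   some weight w_c exceeds alpha, an isolated player gains w_c - alpha by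
   linking to c, so the edgeless graph is not stable; the star centred at c is:
   its diameter 2 is at most beta, so the centre pays nothing and a leaf pays
   exactly alpha, while dropping its link makes it lose at least w_c and any
   other strategy buys at least one link. *)

Section Distance.

Variables (T : finType) (e : rel T).

Lemma dist_le_refl k u : dist_le e k u u.
Proof. by elim: k => [|k IH] //=; rewrite IH. Qed.

Lemma dist_le_mono k k' u v : (k <= k')%N -> dist_le e k u v -> dist_le e k' u v.
Proof.
elim: k' => [|k' IH]; first by rewrite leqn0 => /eqP ->.
by rewrite leq_eqVlt => /orP [/eqP -> //| /IH le_kk'] /= /le_kk' ->.
Qed.

Lemma dist_le_edge k u v : (0 < k)%N -> e u v -> dist_le e k u v.
Proof.
move=> k_gt0 euv; apply: (@dist_le_mono 1) => //=.
by apply/orP; right; apply/existsP; exists u; rewrite eqxx.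
Qed.

Lemma dist_le_closed (A : {set T}) k u v :
  (forall a b, a \in A -> e a b -> b \in A) -> u \in A ->
  dist_le e k u v -> v \in A.
Proof.
move=> closedA uA; elim: k v => [|k IH] v /=; first by move/eqP <-.
by case/orP => [/IH //|/existsP [x /andP [/IH xA exv]]]; exact: closedA xA exv.
Qed.

Lemma dist_le_isolated k u v : (forall x, ~~ e u x) -> dist_le e k u v = (u == v).
Proof.
move=> iso_u; apply/idP/eqP => [|<-]; last exact: dist_le_refl.
have closed_u a b : a \in [set u] -> e a b -> b \in [set u].
  by rewrite in_set1 => /eqP ->; rewrite (negbTE (iso_u b)).
by move/(dist_le_closed closed_u (set11 u)); rewrite in_set1 eq_sym => /eqP.
Qed.

End Distance.

Section Costs.

Variables (R : realFieldType) (n : nat) (w : 'I_n -> R) (alpha : R) (beta : nat).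
Hypotheses (w_ge0 : forall v, 0 <= w v) (alpha_ge0 : 0 <= alpha).

Lemma links_le_cost (S : profile n) u : alpha * #|S u|%:R <= cost w alpha beta S u.
Proof. by rewrite lerDl sumr_ge0. Qed.

Lemma cost_ge0 (S : profile n) u : 0 <= cost w alpha beta S u.
Proof. by apply: le_trans (links_le_cost S u); rewrite mulr_ge0. Qed.

Lemma cost_isolated (S : profile n) u :
  (forall x, ~~ outcome S u x) -> cost w alpha beta S u = \sum_(v | v != u) w v.
Proof.
move=> iso_u; have Su0 : S u = set0.
  apply/setP => x; rewrite in_set0.
  by apply: contraNF (iso_u x) => Sux; rewrite /outcome Sux orbT.
rewrite /cost Su0 cards0 mulr0 add0r; apply: eq_bigl => v.
by rewrite dist_le_isolated // eq_sym.
Qed.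

End Costs.

Lemma wmax_ge (R : realFieldType) n (w : 'I_n -> R) u : w u <= wmax w.
Proof. exact: le_bigmax. Qed.

Lemma wmax_attained (R : realFieldType) n (w : 'I_n -> R) :
  (0 < n)%N -> (forall u, 0 <= w u) -> exists c, wmax w = w c.
Proof.
move=> n_gt0 w_ge0.
have [c _ wmax_c] := @eq_bigmax _ _ _ 0 (Ordinal n_gt0) predT w isT (fun i _ => w_ge0 i).
by exists c.
Qed.

Lemma exists_ord_neq n (c : 'I_n) : (1 < n)%N -> exists u : 'I_n, u != c.
Proof.
rewrite -[n in (1 < n)%N]card_ord => /card_gt1P [x [y [_ _ xy]]].
by case: (eqVneq x c) => [xc|]; [exists y; rewrite -xc eq_sym|exists x].
Qed.

Definition empty_profile n : profile n := fun _ => set0.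

Lemma outcome_edgeless_empty n (S : profile n) :
  (forall x y, @edgeless n x y = outcome S x y) -> forall x, S x = set0.
Proof.
move=> edgelessS x; apply/setP => y; rewrite in_set0.
by apply/negbTE; apply: contraFN (esym (edgelessS y x)) => Sxy; rewrite /outcome Sxy.
Qed.

Section EdgelessProfile.

Variables (R : realFieldType) (n : nat) (w : 'I_n -> R) (alpha : R) (beta : nat).
Variable S : profile n.
Hypotheses (S_empty : forall x, S x = set0) (beta_gt0 : (0 < beta)%N).

Lemma outcome_deviate_empty u T a b :
  outcome (deviate S u T) a b = ((a == u) && (b \in T)) || ((b == u) && (a \in T)).
Proof.
rewrite /outcome /deviate !S_empty orbC.
by case: (a == u); case: (b == u); rewrite ?in_set0.
Qed.

Lemma dist_le_deviate_empty u T v :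
  dist_le (outcome (deviate S u T)) beta u v = (v \in u |: T).
Proof.
apply/idP/idP => [|]; last first.
  rewrite in_setU1 => /orP [/eqP -> |vT]; first exact: dist_le_refl.
  by apply: dist_le_edge; rewrite // outcome_deviate_empty eqxx vT.
apply: dist_le_closed; last exact: setU11.
move=> a b _; rewrite outcome_deviate_empty in_setU1.
by case/orP => /andP [] => [_ ->|-> _]; rewrite ?orbT.
Qed.

Lemma cost_deviate_empty u T :
  cost w alpha beta (deviate S u T) u
  = alpha * #|T|%:R + \sum_(v | v \notin u |: T) w v.
Proof.
rewrite /cost {1}/deviate eqxx; congr (_ + _).
by apply: eq_bigl => v; rewrite dist_le_deviate_empty.
Qed.

Lemma cost_empty u : cost w alpha beta S u = \sum_(v | v != u) w v.
Proof.
by apply: cost_isolated => // x; rewrite /outcome !S_empty !in_set0.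
Qed.

Lemma sum_weights_split u (T : {set 'I_n}) : u \notin T ->
  \sum_(v | v != u) w v = \sum_(v in T) w v + \sum_(v | v \notin u |: T) w v.
Proof.
move=> uT; rewrite (bigID (mem T)) /=; congr (_ + _); apply: eq_bigl => v.
  by case: (eqVneq v u) => [->|]; rewrite ?(negbTE uT) ?andbT.
by rewrite in_setU1 negb_or.
Qed.

Lemma empty_profile_nash : (forall v, w v <= alpha) -> nash w alpha beta S.
Proof.
move=> w_le_alpha; split=> [u|u T uT]; first by rewrite S_empty in_set0.
rewrite cost_empty cost_deviate_empty (sum_weights_split uT) lerD2r.
apply: le_trans (ler_sum _ (fun v _ => w_le_alpha v)) _.
by rewrite sumr_const mulr_natr.
Qed.

Lemma empty_profile_not_nash c u :
  alpha < w c -> u != c -> ~ nash w alpha beta S.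
Proof.
move=> alpha_lt_wc uc [_ /(_ u [set c])]; rewrite in_set1 uc => /(_ isT).
rewrite cost_empty cost_deviate_empty (@sum_weights_split u [set c]) ?in_set1 //.
by rewrite big_set1 cards1 mulr1 lerD2r leNgt alpha_lt_wc.
Qed.

End EdgelessProfile.

Definition star_profile {n} (c : 'I_n) : profile n :=
  fun y => if y == c then set0 else [set c].

Lemma star_outcome n (c : 'I_n) x y : star c x y = outcome (star_profile c) x y.
Proof.
rewrite /star /outcome /star_profile.
case: (eqVneq x c) => [->|xc]; case: (eqVneq y c) => [->|yc];
  by rewrite ?in_set0 ?in_set1 ?eqxx ?(negbTE xc) ?(negbTE yc) ?andbF.
Qed.

Section StarProfile.

Variables (R : realFieldType) (n : nat) (w : 'I_n -> R) (alpha : R) (beta : nat).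
Variable c : 'I_n.
Hypotheses (w_ge0 : forall v, 0 <= w v) (alpha_ge0 : 0 <= alpha).
Hypotheses (beta_gt1 : (1 < beta)%N) (alpha_le_wc : alpha <= w c).

Lemma star_dist_le2 u v : dist_le (outcome (star_profile c)) 2 u v.
Proof.
have to_c x : dist_le (outcome (star_profile c)) 1 x c.
  case: (eqVneq x c) => [->|xc]; first exact: dist_le_refl.
  by apply: dist_le_edge; rewrite // -star_outcome /star xc eqxx orbT.
case: (eqVneq v c) => [->|vc]; first exact: dist_le_mono (to_c u).
apply/orP; right; apply/existsP; exists c; apply/andP; split; first exact: to_c.
by rewrite -star_outcome /star eq_sym vc eqxx.
Qed.

Lemma cost_star u :
  cost w alpha beta (star_profile c) u = alpha * #|star_profile c u|%:R.
Proof.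
rewrite /cost big_pred0 ?addr0 // => v.
by rewrite (dist_le_mono beta_gt1 (star_dist_le2 u v)).
Qed.

Lemma star_leaf_isolated u :
  u != c -> forall x, ~~ outcome (deviate (star_profile c) u set0) u x.
Proof.
move=> uc x; rewrite /outcome /deviate eqxx in_set0 orbF /star_profile.
by case: (x == u); case: (x == c); rewrite ?in_set0 ?in_set1.
Qed.

Lemma star_profile_nash : nash w alpha beta (star_profile c).
Proof.
split=> [u|u T _].
  by rewrite /star_profile; case: (eqVneq u c); rewrite ?in_set0 ?in_set1.
rewrite cost_star /star_profile; case: (eqVneq u c) => [_|uc].
  by rewrite cards0 mulr0 cost_ge0.
rewrite cards1 mulr1; case: (eqVneq T set0) => [->|/set0Pn [t tT]].
  rewrite (cost_isolated _ _ _ (star_leaf_isolated uc)) //.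
  apply: le_trans alpha_le_wc _; rewrite (bigD1 c) 1?eq_sym //=.
  by rewrite lerDl sumr_ge0.
apply: le_trans (links_le_cost alpha beta w_ge0 _ u).
rewrite /deviate eqxx -[X in X <= _]mulr1 ler_wpM2l // ler1n card_gt0.
by apply/set0Pn; exists t.
Qed.

End StarProfile.

Theorem proposition4 (R : realFieldType) (n : nat) (w : 'I_n -> R) (alpha : R)
    (beta : nat) :
  (forall u, 0 < w u) -> 0 < alpha -> (1 <= beta)%N -> (beta <= n.-1)%N ->
  (1 < beta)%N ->
  (exists G : rel 'I_n, is_NE_graph w alpha beta G) /\
  (wmax w <= alpha -> is_NE_graph w alpha beta (@edgeless n)) /\
  (alpha < wmax w ->
     (exists c : 'I_n, is_NE_graph w alpha beta (star c)) /\
     ~ is_NE_graph w alpha beta (@edgeless n)).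
Proof.
move=> w_gt0 alpha_gt0 beta_gt0 beta_le beta_gt1.
have w_ge0 v : 0 <= w v by exact: ltW.
have n_gt1 : (1 < n)%N by lia.
have [c wmax_c] := wmax_attained (ltnW n_gt1) w_ge0.
have edgeless_NE : wmax w <= alpha -> is_NE_graph w alpha beta (@edgeless n).
  move=> wmax_le; exists (@empty_profile n).
  split=> [|x y]; last by rewrite /outcome !in_set0.
  by apply: empty_profile_nash => // v; exact: le_trans (wmax_ge w v) wmax_le.
have star_NE : alpha < wmax w -> is_NE_graph w alpha beta (star c).
  move=> alpha_lt; exists (star_profile c); split; last exact: star_outcome.
  by apply: star_profile_nash; rewrite ?ltW -?wmax_c.
split.
  by case: (leP (wmax w) alpha) => [/edgeless_NE|/star_NE] NE; eexists; exact: NE.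
split=> // alpha_lt; split; first by exists c; exact: star_NE.
case=> S [nashS /outcome_edgeless_empty S_empty].
have [u uc] := exists_ord_neq c n_gt1.
by apply: (empty_profile_not_nash S_empty beta_gt0 _ uc nashS); rewrite -wmax_c.
Qed.
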